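(* Let $A\in\mathbb{R}^{m\times n}$, $K\in\{0,\ldots,\min\{m,n\}-1\}$, $\gamma>0$, and let $X^*$ be a d-stationary point of $$\min_{X\in\mathbb{R}^{m\times n}}\ \|A-X\|_1+\gamma\mathcal{T}_K(X),$$ where $\|Y\|_1=\sum_{i,j}|Y_{i,j}|$. If $\gamma>\sqrt{mn}$, then $\mathcal{T}_K(X^* )=0$, i.e., $\mathrm{rank}(X^* )\le K$.
   Context: $\mathcal{T}_K(X)=\sum_{i=K+1}^{\min\{m,n\}}\sigma_i(X)$, with $\sigma_i(X)$ the $i$-th largest singular value. A point is d-stationary if the directional derivative of the objective there is $\ge0$ in every direction. *)

From HB Require Import structures.
From mathcomp Require Import all_boot all_order all_algebra.
From mathcomp Require Import all_classical all_reals.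
From mathcomp Require Import topology normedtype.
Import numFieldNormedType.Exports.
Set Implicit Arguments. Unset Strict Implicit. Unset Printing Implicit Defensive.
Import Order.TTheory GRing.Theory Num.Theory.
Local Open Scope ring_scope.
Local Open Scope classical_set_scope.

Section Defs.
Variable R : realType.

Definition l1norm (m n : nat) (Y : 'M[R]_(m, n)) : R :=
  \sum_(i < m) \sum_(j < n) `|Y i j|.

Definition rdiag (m n : nat) (s : nat -> R) : 'M[R]_(m, n) :=
  \matrix_(i < m, j < n) (if (i : nat) == (j : nat) then s (i : nat) else 0).

Definition is_singular_values (m n : nat) (X : 'M[R]_(m, n)) (s : nat -> R) :=
  [/\ (forall i j : nat, (i <= j < minn m n)%N -> s j <= s i),
      (forall i : nat, 0 <= s i),
      (forall i : nat, (minn m n <= i)%N -> s i = 0) &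
      exists (U : 'M[R]_m) (V : 'M[R]_n),
        [/\ U^T *m U = 1%:M, V^T *m V = 1%:M & X = U *m rdiag m n s *m V^T]].

(* sigma X i = (i+1)-th largest singular value of X (0-indexed). *)
Definition sigma (m n : nat) (X : 'M[R]_(m, n)) : nat -> R :=
  match pselect (exists s, is_singular_values X s) with
  | left h => projT1 (cid h)
  | right _ => fun _ => 0
  end.

(* T_K(X) = sum_{i = K+1}^{min(m,n)} sigma_i(X)  (1-indexed in the paper) *)
Definition TK (K m n : nat) (X : 'M[R]_(m, n)) : R :=
  \sum_(K <= i < minn m n) sigma X i.

Definition dir_deriv (m n : nat) (F : 'M[R]_(m, n) -> R) (X D : 'M[R]_(m, n))
  (l : R) : Prop :=
  (fun t : R => (F (X + t *: D) - F X) / t) @ (0 : R)^'+ --> l.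

Definition d_stationary (m n : nat) (F : 'M[R]_(m, n) -> R) (X : 'M[R]_(m, n)) :=
  forall D : 'M[R]_(m, n), exists l : R, dir_deriv F X D l /\ 0 <= l.

End Defs.

(** Let [X = U diag(s) V^T] be a singular value decomposition and let [M] be
    its tail [U diag(0, .., 0, s_K, s_(K+1), ..) V^T].  Along [X - t M],
    [0 <= t <= 1], the tail singular values are [(1 - t) s_i], so [T_K]
    decreases at rate [T_K(X)], while the l1 term grows at rate at most
    [||M||_1 <= sqrt(mn) ||M||_F <= sqrt(mn) T_K(X)].  Hence d-stationarity
    gives [gamma T_K(X) <= sqrt(mn) T_K(X)], i.e. [T_K(X) = 0].
    Since [sigma] is defined by choice, the argument needs both the existence
    of the SVD (deflation along a top eigenvector of [X^T X]) and the
    uniqueness of singular values (their squares are the roots of the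
    characteristic polynomial of [X^T X]). *)
From HB Require Import structures.
From mathcomp Require Import all_boot all_order all_algebra.
From mathcomp Require Import all_classical all_reals.
From mathcomp Require Import topology normedtype.
From mathcomp Require Import spectral complex.
From mathcomp Require Import ring lra.
Import Order.TTheory GRing.Theory Num.Theory.
Local Open Scope ring_scope.
Set Implicit Arguments. Unset Strict Implicit. Unset Printing Implicit Defensive.

Lemma char_poly_conj (F : comUnitRingType) n (P A : 'M[F]_n) :
  P \in unitmx -> char_poly (invmx P *m A *m P) = char_poly A.
Proof.
move=> Pu.
have PC : map_mx polyC (invmx P) *m map_mx polyC P = 1%:M.
  by rewrite -map_mxM mulVmx // map_mx1.
rewrite /char_poly /char_poly_mx.
have -> : 'X%:M - map_mx polyC (invmx P *m A *m P) =
    map_mx polyC (invmx P) *m ('X%:M - map_mx polyC A) *m map_mx polyC P.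
  rewrite mulmxBr mulmxBl -!map_mxM; congr (_ - _).
  by rewrite scalar_mxC -mulmxA PC mulmx1.
rewrite !det_mulmx mulrC mulrA -det_mulmx.
by rewrite -map_mxM mulmxV // map_mx1 det1 mul1r.
Qed.

Lemma char_poly_orthoconj (F : comUnitRingType) n (V A : 'M[F]_n) :
  V^T *m V = 1%:M -> char_poly (V *m A *m V^T) = char_poly A.
Proof.
move=> VV; have [VTu _] := mulmx1_unit VV.
have VTV : invmx V^T = V by rewrite -[RHS]mul1mx -(mulVmx VTu) -mulmxA VV mulmx1.
by rewrite -{1}VTV char_poly_conj.
Qed.

(* The real eigenvalues come from the spectral theorem for the hermitian
   complexification of [A]. *)
Lemma sym_char_poly_split (R : rcfType) n (A : 'M[R]_n) : A^T = A ->
  exists r : 'I_n -> R,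
    char_poly A = \prod_(i < n) ('X - (r i)%:P) /\ \sum_i r i = \tr A.
Proof.
move=> AT.
pose Ac := map_mx (real_complex R) A.
have Acreal : Ac \is a realmx.
  by apply/mxOverP => i j; rewrite mxE; apply/complex_realP; exists (A i j).
have herm : Ac \is hermsymmx.
  apply/is_hermitianmxP; rewrite expr0 scale1r.
  have -> : Ac^T = Ac by rewrite /Ac map_trmx AT.
  by rewrite realmxC.
have /orthomx_spectralP AcE := hermitian_normalmx herm.
have dreal := hermitian_spectral_diag_real herm.
set P := spectralmx Ac in AcE; set d := spectral_diag Ac in AcE dreal.
have Pu : P \in unitmx by apply: spectral_unit.
pose r i := complex.Re (d 0 i).
have rE i : real_complex R (r i) = d 0 i.
  by apply: RRe_real; move/mxOverP: dreal; apply.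
exists r; split.
  apply: (map_poly_inj (real_complex R)).
  rewrite map_char_poly -/Ac AcE char_poly_conj // char_poly_trig ?diag_mx_is_trig //.
  rewrite rmorph_prod; apply: eq_bigr => i _.
  by rewrite rmorphB /= map_polyX map_polyC /= rE mxE eqxx mulr1n.
apply: (@complexI R); rewrite rmorph_sum /= -trace_map_mx -/Ac.
under eq_bigr do rewrite rE.
by rewrite AcE -mulmxA mxtrace_mulC -mulmxA mulmxV // mulmx1 mxtrace_diag.
Qed.

Lemma row_dot_selfE (R : numDomainType) k (u : 'rV[R]_k) :
  (u *m u^T) 0 0 = \sum_i u 0 i ^+ 2.
Proof. by rewrite mxE; apply: eq_bigr => i _; rewrite mxE expr2. Qed.

Lemma row_dot_self_ge0 (R : realDomainType) k (u : 'rV[R]_k) :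
  0 <= (u *m u^T) 0 0.
Proof. by rewrite row_dot_selfE sumr_ge0 // => i _; rewrite sqr_ge0. Qed.

Lemma row_dot_self_eq0 (R : realDomainType) k (u : 'rV[R]_k) :
  ((u *m u^T) 0 0 == 0) = (u == 0).
Proof.
apply/idP/idP; last by move/eqP->; rewrite mul0mx mxE.
rewrite row_dot_selfE psumr_eq0 => [/allP u0|i _]; last by rewrite sqr_ge0.
apply/eqP/matrixP => i j; rewrite ord1 mxE.
by have := u0 j (mem_index_enum j); rewrite sqrf_eq0 => /eqP.
Qed.

Lemma tr_gram_gt0 (R : realDomainType) m n (X : 'M[R]_(m, n)) :
  X != 0 -> 0 < \tr (X^T *m X).
Proof.
move=> Xn0; have trE : \tr (X^T *m X) = \sum_i ((row i X) *m (row i X)^T) 0 0.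
  rewrite mxtrace_mulC /mxtrace; apply: eq_bigr => i _; rewrite !mxE.
  by apply: eq_bigr => k _; rewrite !mxE.
have [i0 Xi0] : exists i, row i X != 0.
  apply/existsP; apply: contraR Xn0 => /existsPn X0.
  by apply/eqP/row_matrixP => i; rewrite row0; apply/eqP; move: (X0 i); rewrite negbK.
rewrite trE (bigD1 i0) //= ltr_wpDr ?sumr_ge0 // => [i _|].
  exact: row_dot_self_ge0.
by rewrite lt_def row_dot_self_eq0 Xi0 row_dot_self_ge0.
Qed.

(* A Householder reflection through the hyperplane orthogonal to [v - e_0]. *)
Lemma exists_orthomx_row0 (R : realFieldType) n (v : 'rV[R]_n.+1) :
  v *m v^T = 1%:M -> exists H : 'M_n.+1, H^T *m H = 1%:M /\ 'e_0 *m H = v.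
Proof.
move=> vv; set e : 'rV[R]_n.+1 := 'e_0.
have [/eqP|wn0] := eqVneq (v - e) 0.
  by rewrite subr_eq0 => /eqP ->; exists 1%:M; rewrite trmx1 !mulmx1.
set w := v - e in wn0 *; set c := (w *m w^T) 0 0.
have ee : e *m e^T = 1%:M by rewrite trmx_delta -rowE [LHS]mx11_scalar !mxE.
have ev : e *m v^T = (v 0 0)%:M by rewrite -rowE [LHS]mx11_scalar !mxE.
have ve : v *m e^T = (v 0 0)%:M.
  by rewrite trmx_delta -colE [LHS]mx11_scalar !mxE.
have cE : c = 2 - 2 * v 0 0.
  rewrite /c /w linearB /= mulmxBl !mulmxBr ee ev ve vv !mxE /=; ring.
have cn0 : c != 0 by rewrite /c row_dot_self_eq0.
have ww : w *m w^T = c%:M by rewrite [LHS]mx11_scalar.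
set a := 2 / c; set W := w^T *m w.
have WW : W *m W = c *: W.
  by rewrite /W mulmxA -[w^T *m w *m w^T]mulmxA ww mul_mx_scalar scalemxAl.
exists (1%:M - a *: W).
have -> : (1%:M - a *: W)^T = 1%:M - a *: W.
  by rewrite linearB /= trmx1 linearZ /= /W trmx_mul trmxK.
split.
  rewrite mulmxBl !mulmxBr !mul1mx !mulmx1 -!scalemxAl -!scalemxAr WW !scalerA.
  have -> : a * a * c = a + a by rewrite /a; field.
  by rewrite scalerDl opprB addrK subrK.
rewrite mulmxBr mulmx1 -scalemxAr /W mulmxA.
have -> : e *m w^T = (v 0 0 - 1)%:M by rewrite /w linearB /= mulmxBr ev ee -raddfB.
rewrite mul_scalar_mx scalerA.
have -> : a * (v 0 0 - 1) = -1 by rewrite /a cE; field; rewrite -cE.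
by rewrite scaleN1r opprK /w addrC subrK.
Qed.

Lemma sym_top_eigen (R : rcfType) n (B : 'M[R]_n.+1) : B^T = B -> 0 < \tr B ->
  exists l (v : 'rV_n.+1), [/\ 0 < l, v *m v^T = 1%:M, v *m B = l *: v &
    forall mu (w : 'rV_n.+1), w != 0 -> w *m B = mu *: w -> mu <= l].
Proof.
move=> BT tr_gt0.
have [r [cpE trE]] := sym_char_poly_split BT.
have eigenE mu : eigenvalue B mu = (mu \in map r (index_enum 'I_n.+1)).
  by rewrite eigenvalue_root_char cpE -(big_map r xpredT (fun a => 'X - a%:P))
    root_prod_XsubC.
have [i0 _ r_max] := @arg_maxP _ _ _ ord0 xpredT r isT.
have l_gt0 : 0 < r i0.
  rewrite ltNge; apply/negP => r0; move: tr_gt0; rewrite ltNge -trE.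
  by rewrite sumr_le0 // => i _; exact: le_trans (r_max i isT) r0.
have /eigenvalueP [v vB vn0] : eigenvalue B (r i0).
  by rewrite eigenE map_f ?mem_index_enum.
set k := (v *m v^T) 0 0.
have k_gt0 : 0 < k by rewrite lt_def row_dot_self_eq0 vn0 row_dot_self_ge0.
exists (r i0), ((Num.sqrt k)^-1 *: v); split => //.
- rewrite linearZ /= -scalemxAl -scalemxAr scalerA [v *m v^T]mx11_scalar -/k.
  rewrite scale_scalar_mx -invfM -expr2 sqr_sqrtr ?(ltW k_gt0) // mulVf //.
  by rewrite gt_eqF.
- by rewrite -scalemxAl vB !scalerA mulrC.
move=> mu w wn0 wB.
have : eigenvalue B mu by apply/eigenvalueP; exists w.
by rewrite eigenE => /mapP [i _ ->]; exact: r_max.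
Qed.

Lemma trmx_rdiag_mul (R : realType) m n (s : nat -> R) :
  (forall i, (minn m n <= i)%N -> s i = 0) ->
  (rdiag m n s)^T *m rdiag m n s = diag_mx (\row_(i < n) s i ^+ 2).
Proof.
move=> s0; apply/matrixP => i j; rewrite mxE [RHS]mxE.
have -> : \sum_(k < m) (rdiag m n s)^T i k * rdiag m n s k j =
    \sum_(k < m | (k : nat) == i) (if (i : nat) == j then s i ^+ 2 else 0).
  rewrite [RHS]big_mkcond /=; apply: eq_bigr => k _; rewrite !mxE.
  case: eqP => [->|_]; last by rewrite mul0r.
  by case: eqP => [->|_]; rewrite ?mulr0 ?expr2.
rewrite (@big_ord1_eq _ 0 +%R (fun _ => if (i : nat) == j then s i ^+ 2 else 0)) mxE.
have [<-|ij] := eqVneq i j; last first.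
  have ij_nat : ((i : nat) == j) = false by apply: contraNF ij => /eqP/val_inj->.
  by rewrite ij_nat if_same.
rewrite eqxx mulr1n; case: ltnP => // mi.
by rewrite s0 ?expr0n // (leq_trans (geq_minl m n)).
Qed.

Lemma rdiag0 (R : realType) m n : rdiag m n (fun _ => 0 : R) = 0.
Proof. by apply/matrixP => i j; rewrite !mxE if_same. Qed.

Lemma singular_values0 (R : realType) m n :
  is_singular_values (0 : 'M[R]_(m, n)) (fun _ => 0).
Proof.
split => //; exists 1%:M, 1%:M.
by rewrite rdiag0 !trmx1 !mulmx1 mulmx0.
Qed.

Lemma rdiag_block (R : realType) m n (x : R) (s : nat -> R) :
  rdiag (1 + m) (1 + n) (fun i => if i is i'.+1 then s i' else x) =
  block_mx (x%:M : 'M_1) 0 0 (rdiag m n s).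
Proof.
apply/matrixP => i j.
case: (@split_ordP 1 m i) => i' ->; case: (@split_ordP 1 n j) => j' ->;
  rewrite [LHS]mxE ?block_mxEul ?block_mxEur ?block_mxEdl ?block_mxEdr /=.
- by rewrite !ord1 /= mxE eqxx mulr1n.
- by rewrite !ord1 /= mxE.
- by rewrite !ord1 /= mxE.
- by rewrite mxE /= eqSS add0n.
Qed.

Lemma gram_svd (R : realType) m n (U : 'M[R]_m) (V : 'M[R]_n) s :
  U^T *m U = 1%:M -> (forall i, (minn m n <= i)%N -> s i = 0) ->
  (U *m rdiag m n s *m V^T)^T *m (U *m rdiag m n s *m V^T) =
    V *m diag_mx (\row_i s i ^+ 2) *m V^T.
Proof.
move=> UU s0; rewrite !trmx_mul trmxK -(trmx_rdiag_mul s0) !mulmxA.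
congr (_ *m _); rewrite -!mulmxA; congr (_ *m _).
by rewrite [U^T *m _]mulmxA UU mul1mx.
Qed.

Lemma sv_char_poly (R : realType) m n (X : 'M[R]_(m, n)) s :
  is_singular_values X s ->
  char_poly (X^T *m X) = \prod_(i < n) ('X - (s i ^+ 2)%:P).
Proof.
case=> _ _ s0 [U [V [UU VV ->]]].
rewrite gram_svd // char_poly_orthoconj // char_poly_trig ?diag_mx_is_trig //.
by apply: eq_bigr => i _; rewrite !mxE eqxx mulr1n.
Qed.

Lemma sv_sorted (R : realType) m n (X : 'M[R]_(m, n)) s :
  is_singular_values X s ->
  sorted (fun x y : R => y <= x) [seq s i ^+ 2 | i <- iota 0 n].
Proof.
case=> s_dec s_ge0 s0 _; apply/(sortedP 0) => i; rewrite size_map size_iota => Hi.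
rewrite !(nth_map 0%N) ?size_iota ?(ltnW Hi) // !nth_iota ?(ltnW Hi) // !add0n.
have [im|im] := ltnP i.+1 (minn m n).
  by rewrite lerXn2r ?nnegrE // s_dec // leqnSn.
by rewrite s0 // expr0n /= sqr_ge0.
Qed.

Lemma sv_unique (R : realType) m n (X : 'M[R]_(m, n)) s1 s2 :
  is_singular_values X s1 -> is_singular_values X s2 -> s1 =1 s2.
Proof.
move=> sv1 sv2 i.
have prodE (f : nat -> R) : \prod_(i < n) ('X - (f i)%:P) =
    \prod_(x <- [seq f i | i <- iota 0 n]) ('X - x%:P).
  by rewrite big_map -(big_mkord xpredT (fun i => 'X - (f i)%:P)) /index_iota subn0.
have := etrans (esym (sv_char_poly sv1)) (sv_char_poly sv2).
rewrite (prodE (fun i => s1 i ^+ 2)) (prodE (fun i => s2 i ^+ 2)).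
move=> /prod_XsubC_eq perm_s.
have ge_trans : transitive (fun x y : R => y <= x).
  by move=> x y z /= yx zy; exact: le_trans zy yx.
have ge_anti : antisymmetric (fun x y : R => y <= x).
  by move=> x y /andP [yx xy]; apply/eqP; rewrite eq_le xy yx.
have s_eq := sorted_eq ge_trans ge_anti (sv_sorted sv1) (sv_sorted sv2) perm_s.
case: sv1 sv2 => _ s1_ge0 s1_0 _ [_ s2_ge0 s2_0 _].
have [ni|ni] := ltnP i n; last first.
  by rewrite s1_0 ?s2_0 // (leq_trans (geq_minr m n)).
have := congr1 (fun l => nth 0 l i) s_eq.
rewrite !(nth_map 0%N) ?size_iota // nth_iota // add0n => sq_eq.
by rewrite -(ger0_norm (s1_ge0 i)) -(ger0_norm (s2_ge0 i)) -!sqrtr_sqr sq_eq.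
Qed.

Lemma mulmx_block_diag (R : pzRingType) k1 k2 l1 l2 p1 p2 (a : 'M[R]_(k1, l1))
    (b : 'M[R]_(k2, l2)) (c : 'M[R]_(l1, p1)) (d : 'M[R]_(l2, p2)) :
  block_mx a 0 0 b *m block_mx c 0 0 d = block_mx (a *m c) 0 0 (b *m d).
Proof. by rewrite mulmx_block !mulmx0 !mul0mx !addr0 !add0r. Qed.

Lemma trmx_block_diag (R : pzRingType) k1 k2 l1 l2 (a : 'M[R]_(k1, l1))
    (b : 'M[R]_(k2, l2)) :
  (block_mx a 0 0 b)^T = block_mx a^T 0 0 b^T.
Proof. by rewrite tr_block_mx !trmx0. Qed.

Lemma orthomx_block1 (R : pzRingType) k (a : 'M[R]_k) : a^T *m a = 1%:M ->
  (block_mx (1%:M : 'M_1) 0 0 a)^T *m block_mx (1%:M : 'M_1) 0 0 a = 1%:M.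
Proof.
move=> aa; rewrite trmx_block_diag mulmx_block_diag aa trmx1 mulmx1.
by rewrite -scalar_mx_block.
Qed.

Lemma gram_orthomx_mull (R : comPzRingType) k l (P : 'M[R]_k) (Q : 'M[R]_(k, l)) :
  P^T *m P = 1%:M -> (P^T *m Q)^T *m (P^T *m Q) = Q^T *m Q.
Proof. by move=> /mulmx1C PP; rewrite trmx_mul trmxK mulmxA -[_ *m P *m P^T]mulmxA PP mulmx1. Qed.

Lemma deflate (R : realFieldType) m n (X : 'M[R]_(1 + m, 1 + n))
    (P : 'M_(1 + m)) (Q : 'M_(1 + n)) (u : 'rV_(1 + m)) (v : 'rV_(1 + n)) sg :
  P^T *m P = 1%:M -> Q^T *m Q = 1%:M -> 'e_0 *m P = u -> 'e_0 *m Q = v ->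
  u *m X = sg *: v -> v *m X^T = sg *: u ->
  P *m X *m Q^T = block_mx (sg%:M : 'M_1) 0 0 (drsubmx (P *m X *m Q^T)).
Proof.
move=> PP QQ Pe Qe uX vX.
have PPt := mulmx1C PP; have QQt := mulmx1C QQ.
set Y := P *m X *m Q^T.
have rowY : 'e_0 *m Y = sg *: ('e_0 : 'rV_(1 + n)).
  by rewrite /Y !mulmxA Pe uX -scalemxAl -Qe -mulmxA QQt mulmx1.
have colY : Y *m ('e_0)^T = sg *: ('e_0 : 'rV_(1 + m))^T.
  rewrite /Y -mulmxA -trmx_mul Qe -mulmxA.
  have -> : X *m v^T = (v *m X^T)^T by rewrite trmx_mul trmxK.
  by rewrite vX linearZ /= -Pe trmx_mul -scalemxAr mulmxA PPt mul1mx.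
have Yrow (i : 'I_(1 + m)) j : (i : nat) = 0%N -> Y i j = sg * ((j : nat) == 0%N)%:R.
  move=> i0; have -> : i = 0 by apply/val_inj.
  have := congr1 (fun M : 'rV[R]_(1 + n) => M 0 j) rowY.
  by rewrite -rowE !mxE => ->; rewrite eqxx.
have Ycol i (j : 'I_(1 + n)) : (j : nat) = 0%N -> Y i j = sg * ((i : nat) == 0%N)%:R.
  move=> j0; have -> : j = 0 by apply/val_inj.
  have := congr1 (fun M : 'cV[R]_(1 + m) => M i 0) colY.
  by rewrite trmx_delta -colE !mxE => ->; rewrite eqxx.
clearbody Y; rewrite -{1}(submxK Y); congr block_mx; apply/matrixP => i j;
  rewrite !mxE ?ord1.
- by rewrite Yrow //= mulr1 mulr1n.
- by rewrite Yrow //= mulr0.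
- by rewrite Ycol //= mulr0.
Qed.

Lemma sv_eigen (R : realType) m n (X : 'M[R]_(m, n)) s (j : 'I_n) :
  is_singular_values X s ->
  exists2 w : 'rV_n, w != 0 & w *m (X^T *m X) = s j ^+ 2 *: w.
Proof.
case=> _ _ s0 [U [V [UU VV ->]]]; rewrite gram_svd //.
exists ('e_j *m V^T).
  apply: contraTneq isT => /(congr1 (mulmx^~ V)).
  by rewrite mul0mx -mulmxA VV mulmx1 => /eqP; rewrite -mxrank_eq0 mxrank_delta.
rewrite !mulmxA -[_ *m V^T *m V]mulmxA VV mulmx1 -rowE row_diag_mx mxE.
by rewrite -scalemxAl.
Qed.

Lemma deflate_eigen (R : realFieldType) m n (X : 'M[R]_(1 + m, 1 + n))
    (P : 'M_(1 + m)) (Q : 'M_(1 + n)) sg (X' : 'M_(m, n)) mu (w : 'rV_n) :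
  P^T *m P = 1%:M -> Q^T *m Q = 1%:M ->
  P *m X *m Q^T = block_mx (sg%:M : 'M_1) 0 0 X' ->
  w != 0 -> w *m (X'^T *m X') = mu *: w ->
  exists2 z : 'rV_(1 + n), z != 0 & z *m (X^T *m X) = mu *: z.
Proof.
move=> PP QQ XE wn0 wE.
have QQt := mulmx1C QQ.
set B := block_mx (sg%:M : 'M_1) 0 0 X' in XE *.
have -> : X = P^T *m B *m Q.
  by rewrite -XE !mulmxA PP mul1mx -mulmxA QQ mulmx1.
have -> : (P^T *m B *m Q)^T *m (P^T *m B *m Q) =
    Q^T *m block_mx (sg%:M *m sg%:M : 'M_1) 0 0 (X'^T *m X') *m Q.
  rewrite -!mulmxA gram_orthomx_mull // /B trmx_mul trmx_block_diag.
  by rewrite tr_scalar_mx -!mulmxA; congr (_ *m _); rewrite mulmxA mulmx_block_diag.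
exists (row_mx 0 w *m Q).
  apply: contraTneq isT => /(congr1 (mulmx^~ Q^T)).
  by rewrite mul0mx -mulmxA QQt mulmx1 => /eqP; rewrite row_mx_eq0 eqxx (negbTE wn0).
rewrite !mulmxA -[_ *m Q *m Q^T]mulmxA QQt mulmx1 mul_row_block.
by rewrite !mulmx0 !mul0mx !addr0 add0r wE scalemxAl scale_row_mx scaler0.
Qed.

Lemma top_singular_vectors (R : rcfType) m n (X : 'M[R]_(m, n.+1)) : X != 0 ->
  exists sg (u : 'rV_m) (v : 'rV_n.+1),
    [/\ 0 < sg, u *m u^T = 1%:M, v *m v^T = 1%:M, u *m X = sg *: v
      & v *m X^T = sg *: u] /\
    forall mu (w : 'rV_n.+1), w != 0 -> w *m (X^T *m X) = mu *: w -> mu <= sg ^+ 2.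
Proof.
move=> Xn0; set B := X^T *m X.
have BT : B^T = B by rewrite /B trmx_mul trmxK.
have [l [v [l_gt0 vv vB v_max]]] := sym_top_eigen BT (tr_gram_gt0 Xn0).
set sg := Num.sqrt l.
have sg_gt0 : 0 < sg by rewrite sqrtr_gt0.
have sg2 : sg ^+ 2 = l by rewrite sqr_sqrtr // ltW.
set u := sg^-1 *: (v *m X^T).
have vX : v *m X^T = sg *: u by rewrite /u scalerA mulfV ?gt_eqF // scale1r.
exists sg, u, v; split; last by rewrite sg2.
split=> //.
  rewrite /u linearZ /= -scalemxAl -scalemxAr scalerA trmx_mul trmxK mulmxA.
  rewrite -[v *m X^T *m X]mulmxA -/B vB -scalemxAl vv scalerA scale_scalar_mx.
  by congr (_%:M); rewrite -sg2; field; rewrite gt_eqF.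
rewrite /u -scalemxAl -mulmxA -/B vB scalerA -sg2.
by congr (_ *: _); field; rewrite gt_eqF.
Qed.

Lemma svd_step (R : realType) m n (X : 'M[R]_(1 + m, 1 + n)) :
  (forall X' : 'M[R]_(m, n), exists s, is_singular_values X' s) ->
  X != 0 -> exists s, is_singular_values X s.
Proof.
move=> IH Xn0.
have [sg [u [v [[sg_gt0 uu vv uX vX] top]]]] := top_singular_vectors Xn0.
have [P [PP Pe]] : exists P : 'M_(1 + m), P^T *m P = 1%:M /\ 'e_0 *m P = u.
  exact: exists_orthomx_row0.
have [Q [QQ Qe]] : exists Q : 'M_(1 + n), Q^T *m Q = 1%:M /\ 'e_0 *m Q = v.
  exact: exists_orthomx_row0.
have XE := deflate PP QQ Pe Qe uX vX.
set X' := drsubmx _ in XE.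
have [s' sv'] := IH X'.
have sv'_le j : (j < minn m n)%N -> s' j <= sg.
  move=> jmn; have jn : (j < n)%N by apply: leq_trans jmn (geq_minr m n).
  have [w wn0 /(deflate_eigen PP QQ XE wn0) [z zn0 /(top _ _ zn0) sq_le]] :=
    sv_eigen (Ordinal jn) sv'.
  case: sv' => _ s'_ge0 _ _; move: sq_le.
  by rewrite ler_pXn2r // nnegrE ?s'_ge0 ?ltW.
case: sv' => s'_dec s'_ge0 s'_0 [U' [V' [UU' VV' X'E]]].
have mnE : minn (1 + m) (1 + n) = (minn m n).+1 by rewrite !add1n minnSS.
exists (fun i => if i is i'.+1 then s' i' else sg); split.
- rewrite mnE => -[|i] [|j] //= => [|/andP [ij jmn]]; first exact: sv'_le.
  by apply: s'_dec; rewrite -ltnS ij.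
- by case=> [|i] /=; [apply: ltW | apply: s'_ge0].
- by rewrite mnE => -[|i] //= /s'_0.
exists (P^T *m block_mx (1%:M : 'M_1) 0 0 U'), (Q^T *m block_mx (1%:M : 'M_1) 0 0 V').
split; [by rewrite gram_orthomx_mull // orthomx_block1..|].
have -> : X = P^T *m block_mx (sg%:M : 'M_1) 0 0 X' *m Q.
  by rewrite -XE !mulmxA PP mul1mx -mulmxA QQ mulmx1.
rewrite X'E rdiag_block trmx_mul trmx_block_diag trmxK trmx1 !mulmxA.
congr (_ *m Q); rewrite -!mulmxA; congr (P^T *m _).
by rewrite !mulmx_block_diag mul1mx mulmx1 !mulmxA.
Qed.

Lemma svd_exists (R : realType) m n (X : 'M[R]_(m, n)) :
  exists s, is_singular_values X s.
Proof.
elim: m n X => [|m IH] n X.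
  by rewrite (flatmx0 X); exists (fun _ => 0); apply: singular_values0.
case: n X => [|n] X.
  by rewrite (thinmx0 X); exists (fun _ => 0); apply: singular_values0.
have [->|Xn0] := eqVneq X 0; first by exists (fun _ => 0); apply: singular_values0.
exact: (@svd_step R m n X (IH n) Xn0).
Qed.

Lemma sigmaP (R : realType) m n (X : 'M[R]_(m, n)) :
  is_singular_values X (sigma X).
Proof.
rewrite /sigma; case: pselect => [h|[]]; first by case: (cid h).
exact: svd_exists.
Qed.

Lemma sigma_sv (R : realType) m n (X : 'M[R]_(m, n)) s :
  is_singular_values X s -> sigma X =1 s.
Proof. exact: sv_unique (sigmaP X). Qed.

Lemma sqr_sum_le_card (R : realFieldType) (I : finType) (x : I -> R) :
  (\sum_i x i) ^+ 2 <= #|I|%:R * \sum_i x i ^+ 2.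
Proof.
set S := \sum_i x i; set Q := \sum_i x i ^+ 2.
have inner i : \sum_j (x i - x j) ^+ 2 = #|I|%:R * x i ^+ 2 - (x i * S) *+ 2 + Q.
  under eq_bigr => j _ do rewrite sqrrB.
  by rewrite big_split /= sumrB sumr_const sumrMnl -mulr_sumr mulr_natl.
have sumE : \sum_i \sum_j (x i - x j) ^+ 2 = #|I|%:R * Q - (S * S) *+ 2 + Q *+ #|I|.
  rewrite (eq_bigr _ (fun i _ => inner i)) big_split /= sumrB sumr_const sumrMnl.
  by rewrite -mulr_suml -mulr_sumr.
have : 0 <= \sum_i \sum_j (x i - x j) ^+ 2.
  by apply: sumr_ge0 => i _; apply: sumr_ge0 => j _; apply: sqr_ge0.
rewrite sumE mulr2n -mulr_natl expr2; lra.
Qed.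

Lemma sum_sqr_le_sqr_sum (R : realDomainType) (I : finType) (a : I -> R) :
  (forall i, 0 <= a i) -> \sum_i a i ^+ 2 <= (\sum_i a i) ^+ 2.
Proof.
move=> a_ge0; rewrite [leRHS]expr2 mulr_suml; apply: ler_sum => i _.
by rewrite expr2 ler_wpM2l // (bigD1 i) //= lerDl sumr_ge0.
Qed.

Lemma sum_sqr_mxE (R : comPzSemiRingType) m n (M : 'M[R]_(m, n)) :
  \sum_(i < m) \sum_(j < n) M i j ^+ 2 = \tr (M^T *m M).
Proof.
rewrite /mxtrace exchange_big; apply: eq_bigr => j _; rewrite mxE.
by apply: eq_bigr => i _; rewrite mxE expr2.
Qed.

Lemma sqr_l1norm_le (R : realType) m n (M : 'M[R]_(m, n)) :
  l1norm M ^+ 2 <= (m * n)%:R * \sum_(i < m) \sum_(j < n) M i j ^+ 2.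
Proof.
rewrite /l1norm !pair_big /=.
apply: le_trans (sqr_sum_le_card (fun p : 'I_m * 'I_n => `|M p.1 p.2|)) _.
rewrite card_prod !card_ord (eq_bigr (fun p => M p.1 p.2 ^+ 2)) // => p _.
exact: real_normK (num_real _).
Qed.

Lemma l1normDZ_le (R : realType) m n (B D : 'M[R]_(m, n)) t : 0 <= t ->
  l1norm (B + t *: D) <= l1norm B + t * l1norm D.
Proof.
move=> t_ge0; rewrite /l1norm mulr_sumr -big_split; apply: ler_sum => i _.
rewrite mulr_sumr -big_split; apply: ler_sum => j _; rewrite !mxE.
by rewrite (le_trans (ler_normD _ _)) // normrM (ger0_norm t_ge0).
Qed.

Lemma rank_rdiag_le (R : realType) m n (s : nat -> R) K :
  (forall i, (K <= i)%N -> s i = 0) -> (\rank (rdiag m n s) <= K)%N.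
Proof.
move=> s0; have [nK|Kn] := leqP n K; first exact: leq_trans (rank_leq_col _) nK.
have -> : rdiag m n s = rdiag m n s *m pid_mx K.
  apply/matrixP => i j; rewrite !mxE (bigD1 j) //= big1 ?addr0 => [|k kj].
    rewrite !mxE eqxx /=; case: ltnP => jK; first by rewrite mulr1.
    by rewrite mulr0; case: eqP => // ->; rewrite s0.
  have kj_nat : ((k : nat) == j) = false by apply: contraNF kj => /eqP/val_inj->.
  by rewrite !mxE kj_nat mulr0.
by apply: leq_trans (mxrankM_maxr _ _) _; rewrite rank_pid_mx // ltnW.
Qed.

Section SVDTail.
Variables (R : realType) (m n K : nat) (X : 'M[R]_(m, n)).
Variables (U : 'M[R]_m) (V : 'M[R]_n).
Hypotheses (UU : U^T *m U = 1%:M) (VV : V^T *m V = 1%:M)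
  (XE : X = U *m rdiag m n (sigma X) *m V^T).

Definition sv_tail (i : nat) : R := if (K <= i)%N then sigma X i else 0.

Definition svd_tail : 'M[R]_(m, n) := U *m rdiag m n sv_tail *m V^T.

Lemma sv_tail_ge0 i : 0 <= sv_tail i.
Proof. by rewrite /sv_tail; case: ifP => // _; case: (sigmaP X). Qed.

Lemma sv_tail0 i : (minn m n <= i)%N -> sv_tail i = 0.
Proof. by case: (sigmaP X) => _ _ s0 _ mi; rewrite /sv_tail s0 ?if_same. Qed.

Lemma sum_sv_tail : \sum_(i < n) sv_tail i = TK K X.
Proof.
rewrite /TK (@big_nat_widen _ _ _ _ _ n) ?geq_minr // big_geq_mkord /=.
rewrite [RHS]big_mkcond; apply: eq_bigr => i _; rewrite /sv_tail andbC.
case: (K <= i)%N => //=; case: ltnP => // mi.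
by case: (sigmaP X) => _ _ ->.
Qed.

Lemma sv_sub_svd_tail t : 0 <= t <= 1 ->
  is_singular_values (X - t *: svd_tail)
    (fun i => if (K <= i)%N then (1 - t) * sigma X i else sigma X i).
Proof.
case/andP=> t_ge0 t_le1; have t1_ge0 : 0 <= 1 - t by rewrite subr_ge0.
case: (sigmaP X) => s_dec s_ge0 s0 _; split.
- move=> i j /andP [ij jmn]; case: (leqP K i) => Ki; case: (leqP K j) => Kj.
  + by apply: ler_wpM2l => //; apply: s_dec; rewrite ij jmn.
  + by have := leq_trans Ki ij; rewrite leqNgt Kj.
  + apply: le_trans (s_dec i j _); last by rewrite ij jmn.
    by apply: ler_piMl => //; lra.
  + by apply: s_dec; rewrite ij jmn.
- by move=> i; case: ifP => _; rewrite ?mulr_ge0.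
- by move=> i mi; rewrite s0 // mulr0 if_same.
exists U, V; split => //.
have -> : rdiag m n (fun i => if (K <= i)%N then (1 - t) * sigma X i else sigma X i)
    = rdiag m n (sigma X) - t *: rdiag m n sv_tail.
  apply/matrixP => i j; rewrite !mxE /sv_tail.
  case: ((i : nat) =P j) => _; last by rewrite mulr0 subr0.
  by case: (K <= i)%N; rewrite ?mulr0 ?subr0 // mulrBl mul1r.
by rewrite {1}XE mulmxBr mulmxBl -scalemxAr -scalemxAl.
Qed.

Lemma TK_sub_svd_tail t : 0 <= t <= 1 ->
  TK K (X - t *: svd_tail) = (1 - t) * TK K X.
Proof.
move=> t01; rewrite /TK big_nat_cond [in RHS]big_nat_cond mulr_sumr.
apply: eq_bigr => i /andP [/andP [Ki _] _].
by rewrite (sigma_sv (sv_sub_svd_tail t01)) Ki.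
Qed.

Lemma sqr_l1norm_svd_tail_le : l1norm svd_tail ^+ 2 <= (m * n)%:R * TK K X ^+ 2.
Proof.
apply: le_trans (sqr_l1norm_le _) _; rewrite ler_wpM2l // sum_sqr_mxE.
rewrite gram_svd //; last exact: sv_tail0.
rewrite mxtrace_mulC mulmxA VV mul1mx mxtrace_diag -sum_sv_tail.
under eq_bigr => i _ do rewrite mxE.
by apply: sum_sqr_le_sqr_sum => i; apply: sv_tail_ge0.
Qed.

Lemma dir_deriv_svd_tail_le (A : 'M[R]_(m, n)) gamma l :
  dir_deriv (fun Y => l1norm (A - Y) + gamma * TK K Y) X (- svd_tail) l ->
  l <= l1norm svd_tail - gamma * TK K X.
Proof.
move=> dl; apply: (cvgr_to_le dl); near=> t.
have t_gt0 : 0 < t by near: t; exact: nbhs_right_gt.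
have t_lt1 : t < 1 by near: t; apply: nbhs_right_lt; exact: ltr01.
have t01 : 0 <= t <= 1 by rewrite !ltW.
rewrite scalerN TK_sub_svd_tail // ler_pdivrMr //.
have -> : A - (X - t *: svd_tail) = A - X + t *: svd_tail.
  by rewrite opprD opprK addrA.
have := l1normDZ_le (A - X) svd_tail (ltW t_gt0).
by rewrite mulrBl mulrC; lra.
Unshelve. all: end_near.
Qed.

End SVDTail.

Lemma TK_eq0_sigma (R : realType) m n K (X : 'M[R]_(m, n)) :
  TK K X = 0 -> forall i, (K <= i)%N -> sigma X i = 0.
Proof.
case: (sigmaP X) => _ s_ge0 s0 _ /eqP; rewrite psumr_eq0 // => /allP TK0 i Ki.
have [imn|] := ltnP i (minn m n); last exact: s0.
by apply/eqP/TK0; rewrite mem_index_iota Ki.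
Qed.

Theorem mainTheorem19 (R : realType) (m n : nat) (A : 'M[R]_(m, n)) (K : nat)
  (gamma : R) (Xs : 'M[R]_(m, n)) :
  (K < minn m n)%N ->
  0 < gamma ->
  d_stationary (fun X : 'M[R]_(m, n) => l1norm (A - X) + gamma * TK K X) Xs ->
  Num.sqrt ((m * n)%:R) < gamma ->
  TK K Xs = 0 /\ (\rank Xs <= K)%N.
Proof.
move=> _ gamma_gt0 Xs_stat gamma_gt.
have [_ s_ge0 _ [U [V [UU VV XE]]]] := sigmaP Xs.
have TK0 : TK K Xs = 0.
  apply/eqP; rewrite eq_le sumr_ge0 // andbT leNgt; apply/negP => TK_gt0.
  have [l [/(dir_deriv_svd_tail_le UU VV XE) l_le l_ge0]] := Xs_stat (- svd_tail K Xs U V).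
  have L_le := sqr_l1norm_svd_tail_le K Xs UU VV.
  have mn_lt : (m * n)%:R < gamma ^+ 2.
    by rewrite -ltr_sqrt ?exprn_gt0 // sqrtr_sqr gtr0_norm.
  set L := l1norm _ in l_le L_le; set T := TK K Xs in l_le L_le TK_gt0.
  have gT_le : gamma * T <= L by lra.
  have gT_gt0 : 0 < gamma * T by rewrite mulr_gt0.
  have T2_gt0 : 0 < T ^+ 2 by rewrite exprn_gt0.
  rewrite !expr2 in mn_lt L_le T2_gt0; nra.
split => //; rewrite XE.
apply: leq_trans (mxrankM_maxl _ _) _; apply: leq_trans (mxrankM_maxr _ _) _.
exact: rank_rdiag_le (TK_eq0_sigma TK0).
Qed.
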